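(* Let $m\geq1$ and $c$ be integers with $0<c<m$ and $2c\neq m$. Then for all integers $n\geq0$, $$p^c_m(n)+\sum_{j\geq1}(-1)^j\left(p^c_m\!\left(n-\tfrac{mj^2+(m-2c)j}{2}\right)+p^c_m\!\left(n-\tfrac{mj^2-(m-2c)j}{2}\right)\right)=\begin{cases}1,&\text{if } n=m\,\frac{j(3j-1)}{2}\text{ for some even } j\in\mathbb{Z},\\-1,&\text{if } n=m\,\frac{j(3j-1)}{2}\text{ for some odd } j\in\mathbb{Z},\\0,&\text{otherwise,}\end{cases}$$ i.e. $p^c_m(n)-p^c_m(n-(m-c))-p^c_m(n-c)+p^c_m(n-(3m-2c))+p^c_m(n-(m+2c))-\cdots$ equals the right-hand side above.
   Context: $p^c_m(n)$ denotes the number of partitions of $n$ all of whose parts are congruent to $c$ or $-c$ modulo $m$, with $p^c_m(0)=1$ and $p^c_m(k)=0$ for $k<0$; its generating function is $\prod_{k\ge1}\frac{1}{(1-q^{mk-c})(1-q^{mk-(m-c)})}$. The numbers $j(3j-1)/2$, $j\in\mathbb{Z}$, are the (generalized) pentagonal numbers, which are distinct for distinct $j$. *)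

From mathcomp Require Import all_boot all_algebra.
Set Implicit Arguments. Unset Strict Implicit. Unset Printing Implicit Defensive.
Import GRing.Theory Num.Theory.

(* A partition of n is encoded by its multiplicity function f : part i |-> f i,
   with \sum_i i * f i = n.  Parts and multiplicities are <= n, so 'I_n.+1 suffices. *)
Definition allowed_part (m c i : nat) : bool :=
  (0 < i) && ((i == c %[mod m]) || (i + c == 0 %[mod m])).

Definition pcm (m c n : nat) : nat :=
  #|[set f : {ffun 'I_n.+1 -> 'I_n.+1} |
      (\sum_(i < n.+1) i * f i == n)%N && [forall i, (f i != ord0) ==> allowed_part m c i]]|.

Local Open Scope ring_scope.
Definition pcmZ (m c : nat) (k : int) : int :=
  if (k < 0)%R then 0%R else (pcm m c `|k|%N)%:Z.

Definition pent (j : int) : int := ((j * (3 * j - 1)) %/ 2)%Z.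

From mathcomp Require Import all_boot all_algebra.
From mathcomp Require Import ring zify.
Set Implicit Arguments. Unset Strict Implicit. Unset Printing Implicit Defensive.
Import GRing.Theory Num.Theory.
Local Open Scope ring_scope.

(* Write q for 'X.  The Jacobi triple product in the form
     (q^m; q^m)_oo * prod_(k >= 0) (1 - q^(mk + c)) (1 - q^(mk + m - c))
       = sum_(j in Z) (-1)^j q^((m j^2 - (m - 2c) j) / 2)
   follows from the q-binomial theorem applied to a product of 2n factors, letting n grow.
   As 2c <> m, the product over k is the inverse of the generating function of p^c_m, so
   multiplying the identity by that generating function leaves (q^m; q^m)_oo, which by the
   same identity for (3, 1) at q^m (Euler's pentagonal number theorem) is
   sum_j (-1)^j q^(m j (3j - 1) / 2).  The theorem compares the coefficients of q^n.
   Identities between power series are proved on polynomial truncations, compared up to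
   a given degree. *)

Definition eqlow (R : nzRingType) (N : nat) (p q : {poly R}) :=
  forall i, (i <= N)%N -> p`_i = q`_i.

Section TruncatedEquality.
Variables (R : nzRingType) (N : nat).
Implicit Types p q r : {poly R}.

Lemma eqlow_refl p : eqlow N p p. Proof. by []. Qed.

Lemma eqlow_sym p q : eqlow N p q -> eqlow N q p.
Proof. by move=> hpq i hi; rewrite hpq. Qed.

Lemma eqlow_trans p q r : eqlow N p q -> eqlow N q r -> eqlow N p r.
Proof. by move=> hpq hqr i hi; rewrite hpq // hqr. Qed.

Lemma eqlowD p1 q1 p2 q2 :
  eqlow N p1 q1 -> eqlow N p2 q2 -> eqlow N (p1 + p2) (q1 + q2).
Proof. by move=> h1 h2 i hi; rewrite !coefD h1 // h2. Qed.

Lemma eqlowM p1 q1 p2 q2 :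
  eqlow N p1 q1 -> eqlow N p2 q2 -> eqlow N (p1 * p2) (q1 * q2).
Proof.
move=> h1 h2 i hi; rewrite !coefM; apply: eq_bigr => j _.
by rewrite h1 ?h2 ?(leq_trans (leq_subr _ _) hi) ?(leq_trans (ltnSE (ltn_ord j)) hi).
Qed.

Lemma eqlow_sum (I : Type) (s : seq I) (P : pred I) (F G : I -> {poly R}) :
  (forall i, P i -> eqlow N (F i) (G i)) ->
  eqlow N (\sum_(i <- s | P i) F i) (\sum_(i <- s | P i) G i).
Proof. by move=> h; apply: (big_ind2 (eqlow N)) => //; apply: eqlowD. Qed.

Lemma eqlow_prod (I : Type) (s : seq I) (P : pred I) (F G : I -> {poly R}) :
  (forall i, P i -> eqlow N (F i) (G i)) ->
  eqlow N (\prod_(i <- s | P i) F i) (\prod_(i <- s | P i) G i).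
Proof. by move=> h; apply: (big_ind2 (eqlow N)) => //; apply: eqlowM. Qed.

Lemma eqlow_sum0 (I : Type) (s : seq I) (P : pred I) (F : I -> {poly R}) :
  (forall i, P i -> eqlow N (F i) 0) -> eqlow N (\sum_(i <- s | P i) F i) 0.
Proof.
by move=> h; rewrite -[X in eqlow _ _ X](@big1 _ 0 +%R I s P (fun=> 0)) //; apply: eqlow_sum.
Qed.

Lemma eqlow_prod1 (I : Type) (s : seq I) (P : pred I) (F : I -> {poly R}) :
  (forall i, P i -> eqlow N (F i) 1) -> eqlow N (\prod_(i <- s | P i) F i) 1.
Proof.
by move=> h; rewrite -[X in eqlow _ _ X](@big1 _ 1 *%R I s P (fun=> 1)) //; apply: eqlow_prod.
Qed.

Lemma eqlow_mulXn e p : (N < e)%N -> eqlow N ('X^e * p) 0.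
Proof. by move=> he i hi; rewrite coefXnM coef0 ifT //; lia. Qed.

Lemma eqlow_1subXn e : (N < e)%N -> eqlow N (1 - 'X^e : {poly R}) 1.
Proof.
by move=> he i hi; rewrite coefB coefXn; case: eqP => [?|_]; [lia | rewrite subr0].
Qed.

Lemma eqlow_sum_cut a K b (F G : nat -> {poly R}) : (a <= K <= b)%N ->
  (forall k, (a <= k < K)%N -> eqlow N (F k) (G k)) ->
  (forall k, (K <= k < b)%N -> eqlow N (F k) 0) ->
  eqlow N (\sum_(a <= k < b) F k) (\sum_(a <= k < K) G k).
Proof.
move=> /andP [leaK leKb] headFG tailF0.
rewrite (@big_cat_nat _ _ _ K) //= -[X in eqlow _ _ X]addr0.
apply: eqlowD; rewrite big_nat_cond.
  by rewrite [X in eqlow _ _ X]big_nat_cond; apply: eqlow_sum => k /andP [/headFG].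
by apply: eqlow_sum0 => k /andP [/tailF0].
Qed.

End TruncatedEquality.

Lemma bin2D a b : 'C(a + b, 2) = ('C(a, 2) + 'C(b, 2) + a * b)%N.
Proof.
elim: b => [|b IHb]; first by rewrite addn0 muln0 bin0n !addn0.
by rewrite addnS !binS IHb !bin1; lia.
Qed.

Lemma bin2_mul2 j : ('C(j, 2) * 2 + j = j * j)%N.
Proof. by elim: j => // j IHj; rewrite binS bin1; lia. Qed.

Lemma big_center (R : Type) (idx : R) (op : Monoid.com_law idx) n (F : nat -> R) :
  \big[op/idx]_(0 <= j < (n + n).+1) F j =
  op (\big[op/idx]_(0 <= k < n.+1) F (n + k)%N) (\big[op/idx]_(1 <= l < n.+1) F (n - l)%N).
Proof.
have upper : \big[op/idx]_(n <= j < (n + n).+1) F j = \big[op/idx]_(0 <= k < n.+1) F (n + k)%N.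
  rewrite -{1}[n]add0n big_addn subSn ?leq_addr // addnK.
  by apply: eq_bigr => k _; rewrite addnC.
have lower : \big[op/idx]_(0 <= j < n) F j = \big[op/idx]_(1 <= l < n.+1) F (n - l)%N.
  by rewrite big_nat_rev big_add1 /=; apply: eq_bigr => l _; rewrite add0n subnS.
rewrite (@big_cat_nat _ _ _ n) ?leqW ?leq_addr //=.
by rewrite upper lower Monoid.mulmC.
Qed.

Section QBinomial.
Variable R : comNzRingType.
Implicit Types q x y : R.

Fixpoint qbinomial q n k : R :=
  match n, k with
  | _, 0 => 1
  | 0, _.+1 => 0
  | n'.+1, k'.+1 => qbinomial q n' k' + q ^+ k'.+1 * qbinomial q n' k'.+1
  end.

Definition qpoch q n : R := \prod_(0 <= i < n) (1 - q ^+ i.+1).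

Lemma qbinomial0 q n : qbinomial q n 0 = 1. Proof. by case: n. Qed.

Lemma qbinomialS q n k :
  qbinomial q n.+1 k.+1 = qbinomial q n k + q ^+ k.+1 * qbinomial q n k.+1.
Proof. by []. Qed.

Lemma qbinomial_small q n k : (n < k)%N -> qbinomial q n k = 0.
Proof. by elim: n k => [|n IHn] [|k] //= ltnk; rewrite !IHn ?mulr0 ?addr0 // ltnW. Qed.

Lemma qbinomial_theorem q n x y :
  \prod_(i < n) (y + x * q ^+ i) =
  \sum_(0 <= k < n.+1) q ^+ 'C(k, 2) * qbinomial q n k * x ^+ k * y ^+ (n - k).
Proof.
rewrite big_mkord; elim: n x => [|n IHn] x.
  by rewrite big_ord0 big_ord1 bin0n !expr0 !mulr1.
rewrite big_ord_recl mulr1.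
under eq_bigr do rewrite lift0 exprS mulrA.
rewrite IHn [RHS]big_ord_recl qbinomial0 bin0n subn0 !expr0 !mul1r.
under [in RHS]eq_bigr => k _ do rewrite lift0 qbinomialS subSS mulrDr !mulrDl.
rewrite big_split /= addrCA mulrDl addrC; congr (_ + _); last first.
  rewrite mulr_sumr; apply: eq_bigr => k _.
  rewrite binS bin1 exprD exprMn exprS; ring.
rewrite mulr_sumr big_ord_recl [in RHS]big_ord_recr /=.
rewrite qbinomial0 qbinomial_small // bin0n subn0 !(mulr0, mul0r, addr0) !expr0 !mul1r.
rewrite -exprS.
congr (_ + _); apply: eq_bigr => k _.
rewrite binS bin1 exprD !exprMn.
have -> : (n - k = (n - k.+1).+1)%N by have := ltn_ord k; lia.
rewrite !exprS; ring.
Qed.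

Lemma qbinomial_qpoch q n k : (k <= n)%N ->
  qbinomial q n k * qpoch q k = \prod_(n - k <= i < n) (1 - q ^+ i.+1).
Proof.
have qpochS j : qpoch q j.+1 = qpoch q j * (1 - q ^+ j.+1) by rewrite /qpoch big_nat_recr.
elim: n k => [|n IHn] [|k] lekn //.
- by rewrite /qpoch !big_geq ?mulr1.
- by rewrite qbinomial0 /qpoch subn0 !big_geq ?mulr1.
rewrite subSS qbinomialS [RHS]big_nat_recr ?leq_subr //= mulrDl.
rewrite qpochS mulrA IHn //; have [ltkn | lenk] := ltnP k n; last first.
  have eqkn : k = n by lia.
  by rewrite eqkn qbinomial_small // !(mulr0, mul0r, addr0).
rewrite -mulrA -qpochS IHn // (@big_ltn _ _ _ (n - k.+1)) ?subnSK ?leq_subr //.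
have -> : q ^+ n.+1 = q ^+ k.+1 * q ^+ (n - k).
  by rewrite -exprD; congr (_ ^+ _); lia.
ring.
Qed.

End QBinomial.

Lemma coef_sign_mul (R : nzRingType) (p : {poly R}) j i :
  ((-1) ^+ j * p)`_i = (-1) ^+ j * p`_i.
Proof.
elim: j => [|j IHj]; first by rewrite !expr0 !mul1r.
by rewrite !exprS -!mulrA !mulN1r coefN IHj.
Qed.

Definition theta_exp m c j := (m * 'C(j, 2) + c * j)%N.

(* The theta series sum_j (-1)^j q^((m j^2 - (m - 2c) j) / 2) truncated to |j| < K; the
   second sum holds the terms j < 0, whose exponent at -j is theta_exp m (m - c) j. *)
Definition theta (R : nzRingType) (q : R) m c K :=
  \sum_(0 <= j < K) (-1) ^+ j * q ^+ theta_exp m c j +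
  \sum_(1 <= j < K) (-1) ^+ j * q ^+ theta_exp m (m - c) j.

Definition jtp_prod (R : nzRingType) (q : R) m c n :=
  \prod_(i < n) ((1 - q ^+ (m * i + c)) * (1 - q ^+ (m * i + (m - c)))).

Lemma qpoch_triple (R : comNzRingType) (q : R) n :
  qpoch q (3 * n) = qpoch (q ^+ 3) n * jtp_prod q 3 1 n.
Proof.
elim: n => [|n IHn]; first by rewrite /qpoch /jtp_prod !big_geq ?big_ord0 ?mulr1.
rewrite /qpoch mulnS !big_nat_recr ?leq_addr //= -/(qpoch q (3 * n)) in IHn *.
rewrite IHn /jtp_prod big_ord_recr /= -/(jtp_prod q 3 1 n) -exprM mulnS addn1 addnC.
by rewrite (_ : (3 - 1)%N = 2%N) // addn2 addn3; ring.
Qed.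

Lemma theta_exp_sum m c n : theta_exp m c n = (\sum_(i < n) (m * i + c))%N.
Proof.
rewrite big_split /= -big_distrr sum_nat_const card_ord.
by rewrite -(big_mkord xpredT (fun i => i)) bin2_sum [(n * c)%N]mulnC.
Qed.

Lemma theta_exp_ge m c k : (0 < c)%N -> (k <= theta_exp m c k)%N.
Proof. by move=> c_gt0; rewrite /theta_exp (leq_trans (leq_pmull k c_gt0)) ?leq_addl. Qed.

Lemma jtp_exponent_add m c n k : (k <= n)%N ->
  (m * 'C(n + k, 2) + c * (n + k) + m * n * (n + n - (n + k)) =
   theta_exp m c n + m * n * n + theta_exp m c k)%N.
Proof.
move=> lekn; rewrite /theta_exp bin2D subnDl.
have [r ->] : exists r, n = (k + r)%N by exists (n - k)%N; rewrite subnKC.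
rewrite addKn; nia.
Qed.

Lemma jtp_exponent_sub m c n l : (c <= m)%N -> (l <= n)%N ->
  (m * 'C(n - l, 2) + c * (n - l) + m * n * (n + n - (n - l)) =
   theta_exp m c n + m * n * n + theta_exp m (m - c) l)%N.
Proof.
move=> lecm leln; rewrite /theta_exp.
have [r ->] : exists r, n = (r + l)%N by exists (n - l)%N; rewrite subnK.
have [d ->] : exists d, m = (c + d)%N by exists (m - c)%N; rewrite subnKC.
rewrite addnK addKn bin2D.
have -> : (r + l + (r + l) - r = r + l + l)%N by lia.
have := bin2_mul2 l; nia.
Qed.

Lemma qbinomial_factors_low (R : comNzRingType) (q : R) m c n : (c <= m)%N ->
  \prod_(i < n) (q ^+ (m * n) + (- q ^+ c) * (q ^+ m) ^+ i) =
  (-1) ^+ n * q ^+ theta_exp m c n * \prod_(i < n) (1 - q ^+ (m * i + (m - c))).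
Proof.
move=> lecm.
transitivity (\prod_(i < n)
    ((-1) * q ^+ (m * i + c) * (1 - q ^+ (m * (n - i.+1) + (m - c))))).
  apply: eq_bigr => i _; have ltin := ltn_ord i.
  have mn_split : (m * (n - i.+1) + m * i + m = m * n)%N.
    by rewrite -addnA -mulnSr -mulnDr subnK.
  have -> : (m * n = m * i + c + (m * (n - i.+1) + (m - c)))%N by lia.
  by rewrite -exprM !exprD; ring.
rewrite big_split big_split /= prodr_const card_ord prodrXr -theta_exp_sum.
congr (_ * _); rewrite (reindex_inj rev_ord_inj) /=.
by apply: eq_bigr => i _; rewrite subnSK // subKn // ltnW.
Qed.

Lemma qbinomial_factors_high (R : comNzRingType) (q : R) m c n :
  \prod_(i < n) (q ^+ (m * n) + (- q ^+ c) * (q ^+ m) ^+ (n + i)) =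
  q ^+ (m * n * n) * \prod_(i < n) (1 - q ^+ (m * i + c)).
Proof.
rewrite (eq_bigr (fun i : 'I_n => q ^+ (m * n) * (1 - q ^+ (m * i + c)))) => [|i _].
  by rewrite big_split /= prodr_const card_ord -exprM.
rewrite mulNr -!exprM -!exprD mulrBr mulr1 -exprD; congr (_ - _ ^+ _); lia.
Qed.

(* Expand the 2n factors q^(mn) - q^c (q^m)^i (i < 2n) by the q-binomial theorem: the first
   and last n of them give the two halves of jtp_prod up to the factor (-1)^n q^A, with
   A = theta_exp m c n + m n^2, and the terms n + k and n - l of the expansion give the theta
   terms k and -l times the same factor, which cancels as q != 0. *)
Lemma jtp_finite (R : idomainType) (q : R) m c n : q != 0 -> (c <= m)%N ->
  jtp_prod q m c n =
  \sum_(0 <= k < n.+1)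
    (-1) ^+ k * q ^+ theta_exp m c k * qbinomial (q ^+ m) (n + n)%N (n + k)%N +
  \sum_(1 <= l < n.+1)
    (-1) ^+ l * q ^+ theta_exp m (m - c) l * qbinomial (q ^+ m) (n + n)%N (n - l)%N.
Proof.
move=> q_neq0 lecm; pose A := (theta_exp m c n + m * n * n)%N.
have term j e b : (q ^+ m) ^+ 'C(j, 2) * b * (- q ^+ c) ^+ j * (q ^+ (m * n)) ^+ e =
    (-1) ^+ j * q ^+ (m * 'C(j, 2) + c * j + m * n * e) * b.
  by rewrite (exprNn (q ^+ c)) -!exprM !exprD; ring.
have A_neq0 : (-1) ^+ n * q ^+ A != 0 by rewrite mulf_neq0 ?signr_eq0 ?expf_neq0.
apply: (mulfI A_neq0).
have := qbinomial_theorem (q ^+ m) (n + n)%N (- q ^+ c) (q ^+ (m * n)%N).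
rewrite big_split_ord big_center /= qbinomial_factors_low // qbinomial_factors_high.
have -> : (-1) ^+ n * q ^+ A * jtp_prod q m c n =
    (-1) ^+ n * q ^+ theta_exp m c n * \prod_(i < n) (1 - q ^+ (m * i + (m - c))) *
    (q ^+ (m * n * n) * \prod_(i < n) (1 - q ^+ (m * i + c))).
  by rewrite /jtp_prod big_split /= exprD; ring.
move=> ->; rewrite mulrDr !mulr_sumr; congr (_ + _); apply: eq_big_nat => k /andP [_ ltkn].
  by rewrite term jtp_exponent_add // !exprD; ring.
have sign_sub : (-1) ^+ (n - k) = (-1) ^+ n * (-1) ^+ k :> R.
  by rewrite -signr_odd oddB // signr_addb !signr_odd.
by rewrite term jtp_exponent_sub // sign_sub !exprD; ring.
Qed.

Section TruncatedJTP.
Variables (R : idomainType) (N : nat).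

Lemma eqlow_1subXsn s e : (0 < s)%N -> (N < e)%N -> eqlow N (1 - 'X^s ^+ e : {poly R}) 1.
Proof.
move=> s_gt0 ltNe; rewrite -exprM; apply: eqlow_1subXn.
by rewrite (leq_trans ltNe) ?leq_pmull.
Qed.

Lemma eqlow_qpoch_cut s M : (0 < s)%N -> (N <= M)%N ->
  eqlow N (qpoch ('X^s : {poly R}) M) (qpoch 'X^s N).
Proof.
move=> s_gt0 leNM; rewrite /qpoch (@big_cat_nat _ _ _ N) //= -[X in eqlow _ _ X]mulr1.
apply: eqlowM => //; rewrite big_nat_cond.
by apply: eqlow_prod1 => i /andP [/andP [leNi _] _]; apply: eqlow_1subXsn.
Qed.

Lemma eqlow_qbinomial_qpoch s n k M : (0 < s)%N -> (k <= n)%N ->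
  (N <= k)%N -> (N <= n - k)%N -> (N <= M)%N ->
  eqlow N (qbinomial ('X^s : {poly R}) n k * qpoch 'X^s M) 1.
Proof.
move=> s_gt0 lekn leNk leNnk leNM.
apply: eqlow_trans (_ : eqlow N (qbinomial 'X^s n k * qpoch 'X^s k) 1).
  apply: eqlowM => //; apply: eqlow_trans (eqlow_qpoch_cut s_gt0 leNM) _.
  exact/eqlow_sym/eqlow_qpoch_cut.
rewrite qbinomial_qpoch // big_nat_cond.
apply: eqlow_prod1 => i /andP [/andP [leki _] _].
by apply: eqlow_1subXsn => //; apply: leq_trans leki.
Qed.

Lemma jtp_truncated s m c n M :
  (0 < s)%N -> (0 < c < m)%N -> (N.*2 < n)%N -> (N <= M)%N ->
  eqlow N (qpoch ('X^s ^+ m) M * jtp_prod ('X^s : {poly R}) m c n) (theta 'X^s m c N.+2).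
Proof.
move=> s_gt0 /andP [c_gt0 ltcm] ltNn leNM.
have sm_gt0 : (0 < s * m)%N by rewrite muln_gt0 s_gt0 (ltn_trans c_gt0).
have Xs_neq0 : ('X^s : {poly R}) != 0 by rewrite expf_neq0 ?polyX_eq0.
have vanish (x b : {poly R}) e :
    (N < e)%N -> eqlow N (qpoch 'X^(s * m) M * (x * 'X^s ^+ e * b)) 0.
  move=> ltNe; rewrite mulrCA -mulrA mulrCA -exprM; apply: eqlow_mulXn.
  by rewrite (leq_trans ltNe) ?leq_pmull.
have keep (x : {poly R}) a b : (N <= a)%N -> (N <= b)%N -> (a + b = n + n)%N ->
    eqlow N (qpoch 'X^(s * m) M * (x * qbinomial 'X^(s * m) (n + n)%N a)) x.
  move=> leNa leNb sum_ab; rewrite mulrCA -[X in eqlow _ _ X]mulr1; apply: eqlowM => //.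
  by rewrite mulrC; apply: eqlow_qbinomial_qpoch => //; lia.
rewrite (@jtp_finite _ _ m c n Xs_neq0 (ltnW ltcm)) -(exprM 'X s m).
rewrite mulrDr !mulr_sumr /theta; apply: eqlowD.
  apply: eqlow_sum_cut => [|k /andP [_ ltkN] | k /andP [leNk _]]; first lia.
    by apply: (keep _ _ (n - k)%N); lia.
  by apply: vanish; have := @theta_exp_ge m c k c_gt0; lia.
apply: eqlow_sum_cut => [|l /andP [_ ltlN] | l /andP [leNl _]]; first lia.
  by apply: (keep _ _ (n + l)%N); lia.
have mc_gt0 : (0 < m - c)%N by rewrite subn_gt0.
by apply: vanish; have := @theta_exp_ge m (m - c) l mc_gt0; lia.
Qed.

End TruncatedJTP.

Definition part_term m c i u : {poly int} :=
  if (u == 0%N) || allowed_part m c i then 'X^(i * u) else 0.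

Definition part_gf m c t i := \sum_(0 <= u < t.+1) part_term m c i u.

Definition pcm_gf m c t := \prod_(0 <= i < t.+1) part_gf m c t i.

Lemma coef_pcm_gf_diag m c t : (pcm_gf m c t)`_t = (pcm m c t)%:Z.
Proof.
rewrite /pcm_gf big_mkord /part_gf; under eq_bigr do rewrite big_mkord.
rewrite bigA_distr_bigA coef_sum.
pose ok (f : {ffun 'I_t.+1 -> 'I_t.+1}) := [forall i, (f i != ord0) ==> allowed_part m c i].
have coef_term (f : {ffun 'I_t.+1 -> 'I_t.+1}) :
    (\prod_(i < t.+1) part_term m c i (f i))`_t =
    if (\sum_(i < t.+1) i * f i == t)%N && ok f then 1 else 0.
  case: (boolP (ok f)) => [/forallP okf | /forallPn [i]]; last first.
    rewrite negb_imply => /andP [fi_neq0 /negbTE not_allowed].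
    rewrite (bigD1 i) //= /part_term ifF ?mul0r ?coef0 ?andbF // not_allowed orbF.
    by move: fi_neq0; rewrite -val_eqE => /negbTE.
  rewrite (eq_bigr (fun i : 'I_t.+1 => 'X^(i * f i))) => [|i _]; last first.
    by rewrite /part_term; have := okf i; case: eqP => [-> | _] //= ->; rewrite orbT.
  by rewrite prodrXr coefXn andbT eq_sym; case: (_ == _).
rewrite (eq_bigr _ (fun f _ => coef_term f)) -big_mkcond sumr_const natz /pcm.
by congr (Posz _); apply: eq_card => f; rewrite inE.
Qed.

Lemma eqlow_part_term0 m c t i u : (0 < u)%N -> (t < u)%N || (t < i)%N ->
  eqlow t (part_term m c i u) 0.
Proof.
rewrite /part_term => u_gt0 large; case: ifP => [| _] //.
rewrite -[u == 0%N]negbK -lt0n u_gt0 /=.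
move=> /andP [i_gt0 _]; rewrite -['X^_]mulr1; apply: eqlow_mulXn.
by case/orP: large => [/leq_trans | /leq_trans]; apply; rewrite ?leq_pmull ?leq_pmulr.
Qed.

Lemma eqlow_part_gf_cut m c t N i : (t <= N)%N ->
  eqlow t (part_gf m c N i) (part_gf m c t i).
Proof.
move=> leNt; rewrite /part_gf (@big_cat_nat _ _ _ t.+1) //= -[X in eqlow _ _ X]addr0.
apply: eqlowD => //; rewrite big_nat_cond; apply: eqlow_sum0 => u /andP [/andP [ltTu _] _].
by apply: eqlow_part_term0; rewrite ?ltTu // (leq_trans _ ltTu).
Qed.

Lemma eqlow_part_gf1 m c t i : (t < i)%N -> eqlow t (part_gf m c t i) 1.
Proof.
move=> ltti; rewrite /part_gf big_nat_recl // {1}/part_term eqxx /= muln0 expr0.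
rewrite -[X in eqlow _ _ X]addr0; apply: eqlowD => //.
by apply: eqlow_sum0 => u _; apply: eqlow_part_term0; rewrite ?ltti ?orbT.
Qed.

Lemma coef_pcm_gf m c N t : (t <= N)%N -> (pcm_gf m c N)`_t = (pcm m c t)%:Z.
Proof.
move=> letN; rewrite -coef_pcm_gf_diag.
suff : eqlow t (pcm_gf m c N) (pcm_gf m c t) by apply.
rewrite /pcm_gf (@big_cat_nat _ _ _ t.+1) //= -[X in eqlow _ _ X]mulr1.
apply: eqlowM; first by apply: eqlow_prod => i _; apply: eqlow_part_gf_cut.
rewrite big_nat_cond; apply: eqlow_prod1 => i /andP [/andP [ltti _] _].
exact: eqlow_trans (eqlow_part_gf_cut _ _ _ letN) (eqlow_part_gf1 _ _ ltti).
Qed.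

Lemma part_gf_not_allowed m c t i : ~~ allowed_part m c i -> part_gf m c t i = 1.
Proof.
move=> /negbTE not_allowed; rewrite /part_gf big_nat_recl // big1 => [|u _].
  by rewrite /part_term eqxx muln0 expr0 addr0.
by rewrite /part_term not_allowed.
Qed.

Lemma part_gf_mul_allowed m c t i : allowed_part m c i ->
  part_gf m c t i * (1 - 'X^i) = 1 - 'X^(i * t.+1).
Proof.
move=> allowed_i; rewrite /part_gf (eq_bigr (fun u => 'X^i ^+ u)) => [|u _]; last first.
  by rewrite /part_term allowed_i orbT exprM.
by rewrite big_mkord exprM -[RHS]opprB (subrX1 'X^i); ring.
Qed.

Lemma eqlow_pcm_gf_inv m c N L : (N < L)%N ->
  eqlow N (pcm_gf m c N * \prod_(0 <= i < L | allowed_part m c i) (1 - 'X^i)) 1.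
Proof.
move=> ltNL; rewrite (@big_cat_nat _ _ _ N.+1) //= mulrA -[X in eqlow _ _ X]mulr1.
apply: eqlowM; last first.
  rewrite big_nat_cond; apply: eqlow_prod1 => i /andP [/andP [leNi _] _].
  exact: eqlow_1subXn.
have not_allowed_1 : \prod_(0 <= i < N.+1 | ~~ allowed_part m c i) part_gf m c N i = 1.
  by apply: big1 => i; apply: part_gf_not_allowed.
rewrite /pcm_gf (bigID (allowed_part m c)) /= not_allowed_1 mulr1 -big_split /=.
apply: eqlow_prod1 => i allowed_i; rewrite part_gf_mul_allowed //; apply: eqlow_1subXn.
by move: allowed_i => /andP [i_gt0 _]; rewrite leq_pmull.
Qed.

Lemma allowed_part_block m c k r : (0 < c < m)%N -> (r < m)%N ->
  allowed_part m c (m * k + r)%N = (r == c) || (r == m - c)%N.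
Proof.
move=> /andP [c_gt0 ltcm] ltrm.
have mod_r : ((m * k + r) %% m = r)%N by rewrite mulnC modnMDl modn_small.
have mod_rc : ((m * k + r + c) %% m = (r + c) %% m)%N by rewrite -addnA mulnC modnMDl.
rewrite /allowed_part mod_r (modn_small ltcm) mod_rc mod0n.
have [ltrcm | lemrc] := ltnP (r + c) m; first by rewrite modn_small //; lia.
by rewrite -(subnK lemrc) modnDr modn_small; lia.
Qed.

Lemma prod_allowed_block (R : comNzRingType) m c L (F : nat -> R) :
  (0 < c < m)%N -> (2 * c != m)%N ->
  \prod_(0 <= i < m * L | allowed_part m c i) F i =
  \prod_(k < L) (F (m * k + c)%N * F (m * k + (m - c))%N).
Proof.
move=> c_range c2_neq_m; have /andP [c_gt0 ltcm] := c_range.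
have ltmcm : (m - c < m)%N by rewrite ltn_subrL c_gt0 (ltn_trans c_gt0).
elim: L => [|L IHL]; first by rewrite muln0 big_geq ?big_ord0.
rewrite big_ord_recr -IHL mulnS addnC (@big_cat_nat _ _ _ (m * L)) ?leq_addr //=.
congr (_ * _); rewrite -{1}[(m * L)%N]add0n big_addn addKn big_mkord.
have allowed_r r : (r < m)%N -> allowed_part m c (r + m * L)%N = (r == c) || (r == m - c)%N.
  by move=> ltrm; rewrite addnC allowed_part_block.
rewrite (bigD1 (Ordinal ltcm)) ?allowed_r ?eqxx //= (bigD1 (Ordinal ltmcm)) /=; last first.
  by rewrite allowed_r // eqxx orbT -val_eqE /=; apply/eqP; lia.
rewrite big1 ?mulr1 => [|r]; first by rewrite addnC [(m - c + _)%N]addnC.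
by rewrite allowed_r // -!val_eqE /= => /andP [/andP [/orP [-> | ->]]].
Qed.

Lemma pcm_gf_theta m c N : (0 < c < m)%N -> (2 * c != m)%N ->
  eqlow N (pcm_gf m c N * theta 'X m c N.+2) (theta 'X^m 3 1 N.+2).
Proof.
move=> c_range c2_neq_m; have m_gt0 : (0 < m)%N by case/andP: c_range => /ltn_trans; apply.
set n := N.*2.+1; have lt2Nn : (N.*2 < n)%N by [].
have ltNn : (N < n)%N by lia.
have le3n : (N <= 3 * n)%N by lia.
have jtp_mc := @jtp_truncated int N 1 m c n (3 * n) isT c_range lt2Nn le3n.
have jtp_31 := @jtp_truncated int N m 3 1 n n m_gt0 isT lt2Nn (ltnW ltNn).
rewrite expr1 in jtp_mc.
apply: eqlow_trans (eqlowM (eqlow_refl _) (eqlow_sym jtp_mc)) _.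
apply: eqlow_trans jtp_31; rewrite -qpoch_triple mulrCA -[X in eqlow _ _ X]mulr1.
apply: eqlowM => //; rewrite /jtp_prod -(@prod_allowed_block _ m c n (fun i => 1 - 'X^i)) //.
by apply: eqlow_pcm_gf_inv; rewrite (leq_trans ltNn) ?leq_pmull.
Qed.

Lemma coef_pcm_gf_mulXn m c n e : (pcm_gf m c n * 'X^e)`_n = pcmZ m c (n%:Z - e%:Z).
Proof.
rewrite coefMXn /pcmZ subr_lt0 ltz_nat; case: ltnP => // leen.
by rewrite subzn // coef_pcm_gf ?leq_subr.
Qed.

Lemma coef_pcm_gf_theta m c n K : (pcm_gf m c n * theta 'X m c K)`_n =
  \sum_(0 <= j < K) (-1) ^+ j * pcmZ m c (n%:Z - (theta_exp m c j)%:Z) +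
  \sum_(1 <= j < K) (-1) ^+ j * pcmZ m c (n%:Z - (theta_exp m (m - c) j)%:Z).
Proof.
rewrite /theta mulrDr coefD !mulr_sumr !coef_sum.
by congr (_ + _); apply: eq_bigr => j _; rewrite mulrCA coef_sign_mul coef_pcm_gf_mulXn.
Qed.

Lemma coef_theta_Xn (R : nzRingType) s m c K n : (theta ('X^s : {poly R}) m c K)`_n =
  \sum_(0 <= j < K) (-1) ^+ j * (n == s * theta_exp m c j)%:R +
  \sum_(1 <= j < K) (-1) ^+ j * (n == s * theta_exp m (m - c) j)%:R.
Proof.
rewrite /theta coefD !coef_sum.
by congr (_ + _); apply: eq_bigr => j _; rewrite coef_sign_mul -exprM coefXn.
Qed.

Lemma theta_exp_mul2 m c j :
  (theta_exp m c j)%:Z * 2 = m%:Z * j%:Z ^+ 2 - (m%:Z - 2 * c%:Z) * j%:Z.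
Proof.
have := congr1 Posz (bin2_mul2 j); rewrite /theta_exp !PoszD !PoszM => bin2j.
have -> : j%:Z ^+ 2 = 'C(j, 2)%:Z * 2 + j%:Z by rewrite expr2 bin2j.
ring.
Qed.

Lemma theta_exp_divz m c j :
  ((m%:Z * j%:Z ^+ 2 - (m%:Z - 2 * c%:Z) * j%:Z) %/ 2)%Z = (theta_exp m c j)%:Z.
Proof. by rewrite -theta_exp_mul2 mulzK. Qed.

Lemma theta_exp_compl_divz m c j : (c <= m)%N ->
  ((m%:Z * j%:Z ^+ 2 + (m%:Z - 2 * c%:Z) * j%:Z) %/ 2)%Z = (theta_exp m (m - c) j)%:Z.
Proof. by move=> lecm; rewrite -theta_exp_divz -subzn //; congr (_ %/ _)%Z; ring. Qed.

Lemma pent_nat k : pent k%:Z = (theta_exp 3 1 k)%:Z.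
Proof. by rewrite /pent -theta_exp_divz; congr (_ %/ _)%Z; ring. Qed.

Lemma pent_oppn k : pent (- k%:Z) = (theta_exp 3 2 k)%:Z.
Proof. by rewrite /pent -theta_exp_divz; congr (_ %/ _)%Z; ring. Qed.

Lemma pent_mul2 j : pent j * 2 = j * (3 * j - 1).
Proof.
case: j => k; first by rewrite pent_nat theta_exp_mul2; ring.
by rewrite NegzE pent_oppn theta_exp_mul2; ring.
Qed.

Lemma pent_inj : injective pent.
Proof.
move=> a b /(congr1 (fun x => x * 2)); rewrite !pent_mul2 => /eqP.
rewrite -subr_eq0 (_ : _ - _ = (a - b) * (3 * (a + b) - 1)); last by ring.
by rewrite mulf_eq0 subr_eq0 => /orP [/eqP // | /eqP]; lia.
Qed.

Lemma absz_le_pent j : `|j|%:Z <= pent j.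
Proof.
case: j => k; first by rewrite pent_nat lez_nat theta_exp_ge.
by rewrite NegzE pent_oppn abszN lez_nat theta_exp_ge.
Qed.

Lemma sign_absz (R : nzRingType) (j : int) :
  (-1) ^+ `|j| = (if (2 %| j)%Z then 1 else -1) :> R.
Proof. by rewrite -signr_odd dvdzE dvdn2; case: (odd _). Qed.

Lemma sum_nat_mul_pred1 (R : nzRingType) lo hi k (F : nat -> R) (Q : pred nat) :
  (lo <= k < hi)%N -> (forall i, Q i = (i == k)) ->
  \sum_(lo <= i < hi) F i * (Q i)%:R = F k.
Proof.
move=> k_in Qk; rewrite (bigD1_seq k) ?mem_index_iota ?iota_uniq //= Qk eqxx mulr1.
by rewrite big1 ?addr0 // => i /negbTE i_neq_k; rewrite Qk i_neq_k mulr0.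
Qed.

Lemma sum_sign_pred1 (R : nzRingType) (P : pred int) K j :
  (forall i, P i = (i == j)) -> (`|j| < K)%N ->
  \sum_(0 <= k < K) (-1) ^+ k * (P k%:Z)%:R +
  \sum_(1 <= l < K) (-1) ^+ l * (P (- l%:Z))%:R = (-1) ^+ `|j| :> R.
Proof.
case: j => k Pk ltkK.
  rewrite (@sum_nat_mul_pred1 _ 0 K k) => [||i]; last by rewrite Pk eqz_nat.
  - rewrite big_nat_cond big1 ?addr0 // => l /andP [/andP [l_gt0 _] _].
    by rewrite Pk (_ : (- l%:Z == k%:Z) = false) ?mulr0 //; apply/eqP; lia.
  - exact: ltkK.
rewrite big1 ?add0r => [|i _]; last by rewrite Pk mulr0.
by rewrite (@sum_nat_mul_pred1 _ 1 K k.+1) // => i; rewrite Pk NegzE eqr_opp eqz_nat.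
Qed.

Lemma coef_euler_theta m n K : (theta ('X^m : {poly int}) 3 1 K)`_n =
  \sum_(0 <= k < K) (-1) ^+ k * (n%:Z == m%:Z * pent k%:Z)%:R +
  \sum_(1 <= l < K) (-1) ^+ l * (n%:Z == m%:Z * pent (- l%:Z))%:R.
Proof.
rewrite coef_theta_Xn; congr (_ + _); apply: eq_bigr => j _.
  by rewrite pent_nat -PoszM eqz_nat.
by rewrite pent_oppn -PoszM eqz_nat.
Qed.

Lemma coef_euler_pent m n j : (0 < m)%N -> n%:Z = m%:Z * pent j ->
  (theta ('X^m : {poly int}) 3 1 n.+2)`_n = (-1) ^+ `|j|.
Proof.
move=> m_gt0 n_eq; rewrite coef_euler_theta.
apply: (@sum_sign_pred1 _ (fun i => n%:Z == m%:Z * pent i)) => [i|].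
  have m_neq0 : m%:Z != 0 by rewrite eqz_nat -lt0n.
  by rewrite n_eq (inj_eq (mulfI m_neq0)) (inj_eq pent_inj) eq_sym.
by move: (absz_le_pent j) n_eq; move: (pent j) `|j|%N => p a; nia.
Qed.

Lemma coef_euler_not_pent m n K : (forall j, n%:Z <> m%:Z * pent j) ->
  (theta ('X^m : {poly int}) 3 1 K)`_n = 0.
Proof.
move=> not_pent; rewrite coef_euler_theta !big1 ?addr0 // => i _;
  by case: eqP => [/not_pent | _]; rewrite ?mulr0.
Qed.

Theorem theorem8 (m c : nat) (hm : (1 <= m)%N) (hc0 : (0 < c)%N) (hcm : (c < m)%N)
    (h2c : (2 * c != m)%N) (n : nat) :
  let LHS : int :=
    pcmZ m c n%:Z +
    \sum_(1 <= j < n.+2)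
      (-1) ^+ j *
        (pcmZ m c (n%:Z - ((m%:Z * j%:Z ^+ 2 + (m%:Z - 2 * c%:Z) * j%:Z) %/ 2)%Z)
       + pcmZ m c (n%:Z - ((m%:Z * j%:Z ^+ 2 - (m%:Z - 2 * c%:Z) * j%:Z) %/ 2)%Z)) in
  (forall j : int, (2 %| j)%Z -> n%:Z = m%:Z * pent j -> LHS = 1) /\
  (forall j : int, ~~ (2 %| j)%Z -> n%:Z = m%:Z * pent j -> LHS = -1) /\
  ((forall j : int, n%:Z <> m%:Z * pent j) -> LHS = 0).
Proof.
move=> LHS; have c_range : (0 < c < m)%N by rewrite hc0 hcm.
have LHS_euler : LHS = (theta ('X^m : {poly int}) 3 1 n.+2)`_n.
  rewrite -(pcm_gf_theta c_range h2c (leqnn n)) coef_pcm_gf_theta big_ltn //.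
  rewrite (_ : theta_exp m c 0 = 0%N) ?subr0 ?mul1r; last by rewrite /theta_exp bin0n !muln0.
  rewrite /LHS -addrA -big_split /=; congr (_ + _); apply: eq_bigr => j _.
  by rewrite theta_exp_compl_divz ?(ltnW hcm) // theta_exp_divz mulrDr addrC.
split; [|split].
- by move=> j even_j n_eq; rewrite LHS_euler (coef_euler_pent hm n_eq) sign_absz even_j.
- by move=> j odd_j n_eq; rewrite LHS_euler (coef_euler_pent hm n_eq) sign_absz (negbTE odd_j).
- by move=> not_pent; rewrite LHS_euler coef_euler_not_pent.
Qed.
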